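(* Let $\gamma\geq0$ and $G=(V,E,\omega)\in\mathcal C_\gamma$. Define, for $i,j\in V$, $\tilde\omega_{ij}:=-d_j^r\sum_{m=1}^{n-1}\Lambda_m\phi^m_i\phi^m_j$ if $i\neq j$ and $\tilde\omega_{ii}:=0$. Then $\tilde\omega_{ij}\geq0$ for all $i,j\in V$, and $\omega_{ij}>0$ implies $\tilde\omega_{ij}>0$. If, additionally, $G\in\mathcal C$, then $\tilde\omega_{ij}\geq d_i^{-r}\omega_{ij}$ for all $i,j\in V$.
   Context: $\mathcal{G}$ is the set of finite, simple, connected, undirected, edge-weighted graphs $G=(V,E,\omega)$ with $V=\{1,\dots,n\}$, $n\geq2$, weights $\omega_{ij}=\omega_{ji}>0$ on edges, $0$ otherwise. $d_i=\sum_j\omega_{ij}$. $\mathcal V$: functions $V\to\mathbb R$. Fixed $r\in[0,1]$: $\langle u,v\rangle_{\mathcal V}=\sum_id_i^ru_iv_i$, $(\Delta u)_i=d_i^{-r}\sum_j\omega_{ij}(u_i-u_j)$, $\mathcal M(u)=\sum_id_i^ru_i$, $\mathrm{vol}(V)=\sum_id_i^r$, $\mathcal A(u)=\frac{\mathcal M(u)}{\mathrm{vol}(V)}\chi_V$. $0=\lambda_0<\lambda_1\leq\dots\leq\lambda_{n-1}$: eigenvalues of $\Delta$ with $\langle\cdot,\cdot\rangle_{\mathcal V}$-orthonormal eigenfunctions $\phi^0=\mathrm{vol}(V)^{-1/2}\chi_V,\phi^1,\dots,\phi^{n-1}$; $\Lambda_m=\lambda_m+\gamma/\lambda_m$ for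 $m\geq1$. Equilibrium measure $\nu^S$ ($S\subsetneq V$): unique $\nu\in\mathcal V$ with $(\Delta\nu)_i=1$ on $S$, $\nu=0$ off $S$. $f^j:=\nu^{V\setminus\{j\}}-\mathcal A(\nu^{V\setminus\{j\}})$. $\mathcal C=\{G\in\mathcal G:\forall j\ \forall i\neq j:\ f^j_i\geq0\}$; $\mathcal C^0=\{G\in\mathcal G:\forall j\ \forall i\neq j:\ \omega_{ij}>0\text{ or }f^j_i\geq0\}$; for $\gamma>0$, $\mathcal C_\gamma=\{G\in\mathcal C^0:\forall j\ \forall i\neq j:\ \omega_{ij}=0\text{ or }d_i^{-r}\omega_{ij}+\gamma\frac{d_j^r}{\mathrm{vol}(V)}f^j_i>0\}$; $\mathcal C_0:=\mathcal G$. *)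

From HB Require Import structures.
From mathcomp Require Import all_boot all_order all_algebra.
From mathcomp Require Import classical_sets reals exp.
Set Implicit Arguments. Unset Strict Implicit. Unset Printing Implicit Defensive.
Import Order.TTheory GRing.Theory Num.Theory.
Local Open Scope ring_scope.

(* A weighted graph on V = 'I_n is given by its weight function w : 'I_n -> 'I_n -> R,
   w i j > 0 iff {i,j} is an edge, w i j = 0 otherwise. *)
Definition is_graph (R : realType) (n : nat) (w : 'I_n -> 'I_n -> R) : Prop :=
  [/\ (2 <= n)%N,
      (forall i j, w i j = w j i),
      (forall i, w i i = 0),
      (forall i j, 0 <= w i j) &
      (forall i j, connect (fun a b => 0 < w a b) i j)].

Section Graph.
Variables (R : realType) (n : nat) (w : 'I_n -> 'I_n -> R) (r : R).

Definition deg (i : 'I_n) : R := \sum_j w i j.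
Definition degr (i : 'I_n) : R := deg i `^ r.

Definition inner (u v : 'I_n -> R) : R := \sum_i degr i * u i * v i.
Definition lap (u : 'I_n -> R) (i : 'I_n) : R :=
  (degr i)^-1 * \sum_j w i j * (u i - u j).
Definition mass (u : 'I_n -> R) : R := \sum_i degr i * u i.
Definition vol : R := \sum_i degr i.
Definition avg (u : 'I_n -> R) : 'I_n -> R := fun _ => mass u / vol.

Definition is_eqmeas (S : {set 'I_n}) (nu : 'I_n -> R) : Prop :=
  (forall i, i \in S -> lap nu i = 1) /\ (forall i, i \notin S -> nu i = 0).
Definition eqmeas (S : {set 'I_n}) : 'I_n -> R :=
  fun i => (xget (0 : {ffun 'I_n -> R}) [set f | is_eqmeas S (fun k => f k)]) i.

Definition fj (j : 'I_n) : 'I_n -> R :=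
  fun i => eqmeas [set~ j] i - avg (eqmeas [set~ j]) i.

Definition inC : Prop := forall j i, i != j -> 0 <= fj j i.
Definition inC0 : Prop := forall j i, i != j -> 0 < w i j \/ 0 <= fj j i.
(* C_gamma for gamma > 0; C_0 := all graphs *)
Definition inCgamma (gamma : R) : Prop :=
  gamma = 0 \/
  (0 < gamma /\ inC0 /\
   forall j i, i != j ->
     w i j = 0 \/ 0 < (degr i)^-1 * w i j + gamma * degr j / vol * fj j i).

Definition is_eigendecomp (lam : 'I_n -> R) (phi : 'I_n -> 'I_n -> R) : Prop :=
  [/\ (forall m : 'I_n, (m : nat) = 0%N -> lam m = 0 /\ forall i, phi m i = (Num.sqrt vol)^-1),
      (forall m : 'I_n, (0 < m)%N -> 0 < lam m),
      (forall m k : 'I_n, (m <= k)%N -> lam m <= lam k),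
      (forall m i, lap (phi m) i = lam m * phi m i) &
      (forall m k, inner (phi m) (phi k) = (m == k)%:R)].

Definition wtilde (gamma : R) (lam : 'I_n -> R) (phi : 'I_n -> 'I_n -> R)
  (i j : 'I_n) : R :=
  if i == j then 0 else
  - (degr j * \sum_(m : 'I_n | (0 < m)%N) (lam m + gamma / lam m) * phi m i * phi m j).

End Graph.

(* Expand in the orthonormal eigenbasis.  The spectral sum Σ_{m>0} λ_m φ^m_i φ^m_j
   is -ω_ij / (d_i^r d_j^r) off the diagonal, while g_j := Σ_{m>0} λ_m^{-1} φ^m_j φ^m
   is a Green function: Δ g_j = δ_j / d_j^r - 1 / vol(V) and M(g_j) = 0.  Hence
   ν^{V∖{j}} = -vol(V) (g_j - g_j(j)) and f^j = -vol(V) g_j, which gives, for i ≠ j,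
   ω̃_ij = d_i^{-r} ω_ij + γ d_j^r / vol(V) f^j_i.  The three claims are then exactly
   the defining conditions of C_γ, C^0 and C. *)
From HB Require Import structures.
From mathcomp Require Import all_boot all_order all_algebra.
From mathcomp Require Import boolp classical_sets reals exp.
From mathcomp Require Import ring.
Set Implicit Arguments. Unset Strict Implicit. Unset Printing Implicit Defensive.
Import Order.TTheory GRing.Theory Num.Theory.
Local Open Scope ring_scope.

Lemma sum_antisym_eq0 (R : numDomainType) (I : finType) (F : I -> I -> R) :
  (forall i k, F k i = - F i k) -> \sum_i \sum_k F i k = 0.
Proof.
move=> FN; set S := \sum_i _.
have SN : S = - S.
  rewrite /S {1}exchange_big -sumrN; apply: eq_bigr => i _.
  by rewrite -sumrN; apply: eq_bigr => k _; rewrite FN.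
have : S *+ 2 = 0 by rewrite mulr2n {1}SN addNr.
by move/eqP; rewrite mulrn_eq0 /= => /eqP.
Qed.

Lemma sum_ord_gt0 (R : zmodType) (n : nat) (F : 'I_n -> R) (m0 : 'I_n) :
  val m0 = 0%N -> \sum_(m : 'I_n | (0 < m)%N) F m = \sum_m F m - F m0.
Proof.
move=> m0E; rewrite [in RHS](bigD1 m0) //= addrC addrK; apply: eq_bigl => m.
by rewrite -val_eqE m0E lt0n.
Qed.

Section Laplacian.
Variables (R : realType) (n : nat) (w : 'I_n -> 'I_n -> R) (r : R).

Lemma lap_sum (P : pred 'I_n) (c : 'I_n -> R) (f : 'I_n -> 'I_n -> R) i :
  lap w r (fun k => \sum_(m | P m) c m * f m k) i
  = \sum_(m | P m) c m * lap w r (f m) i.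
Proof.
rewrite /lap; under eq_bigr do rewrite -sumrB mulr_sumr.
rewrite exchange_big mulr_sumr; apply: eq_bigr => m _.
by rewrite mulrCA !mulr_sumr; apply: eq_bigr => k _; ring.
Qed.

Lemma lap_affine a b (u : 'I_n -> R) i :
  lap w r (fun k => a * (u k - b)) i = a * lap w r u i.
Proof. by rewrite /lap mulrCA !mulr_sumr; apply: eq_bigr => k _; ring. Qed.

Lemma lapB (u v : 'I_n -> R) i :
  lap w r (fun k => u k - v k) i = lap w r u i - lap w r v i.
Proof. by rewrite /lap -mulrBr -sumrB !mulr_sumr; apply: eq_bigr => k _; ring. Qed.

End Laplacian.

Section Spectral.
Variables (R : realType) (n : nat) (w : 'I_n -> 'I_n -> R) (r : R).
Variables (lam : 'I_n -> R) (phi : 'I_n -> 'I_n -> R).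
Hypothesis w_sym : forall i j, w i j = w j i.
Hypothesis eig : is_eigendecomp w r lam phi.

Local Notation d := (degr w r).
Local Notation V := (vol w r).

(* Orthonormality says P Q = 1 for P := (φ^m_i)_{m,i} and Q := (d_i φ^m_i)_{i,m};
   completeness is Q P = 1. *)
Lemma degr_phi_complete i k : \sum_m d i * phi m i * phi m k = (i == k)%:R.
Proof.
case: eig => _ _ _ _ phi_on.
pose P : 'M[R]_n := \matrix_(m, i) phi m i.
pose Q : 'M[R]_n := \matrix_(i, m) (d i * phi m i).
have PQ : P *m Q = 1%:M.
  apply/matrixP => m k'; rewrite !mxE -phi_on /inner.
  by apply: eq_bigr => i' _; rewrite !mxE mulrCA mulrA.
have /matrixP/(_ i k) := mulmx1C PQ; rewrite !mxE => <-.
by apply: eq_bigr => m _; rewrite !mxE.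
Qed.

Lemma degr_gt0 i : 0 < d i.
Proof.
rewrite lt_def powR_ge0 andbT; apply/eqP => di0.
have := degr_phi_complete i i; rewrite eqxx big1 => [/eqP|m _].
  by rewrite eq_sym oner_eq0.
by rewrite di0 !mul0r.
Qed.

Lemma degr_neq0 i : d i != 0.
Proof. by rewrite gt_eqF ?degr_gt0. Qed.

Lemma sum_phi_phi i k : \sum_m phi m i * phi m k = (i == k)%:R / d i.
Proof.
apply: (mulfI (degr_neq0 i)).
rewrite mulrCA divff ?degr_neq0 // mulr1 mulr_sumr -(degr_phi_complete i k).
by apply: eq_bigr => m _; rewrite mulrA.
Qed.

Lemma inner_lapE a b :
  inner w r (lap w r a) b = \sum_i \sum_k w i k * (a i - a k) * b i.
Proof.
apply: eq_bigr => i _.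
by rewrite /lap mulrA divff ?degr_neq0 // mul1r mulr_suml.
Qed.

Lemma inner_lapC a b : inner w r (lap w r a) b = inner w r a (lap w r b).
Proof.
apply/eqP; rewrite -subr_eq0; apply/eqP.
have -> : inner w r a (lap w r b) = \sum_i \sum_k w i k * (b i - b k) * a i.
  by rewrite -inner_lapE; apply: eq_bigr => i _; ring.
rewrite inner_lapE -sumrB; under eq_bigr do rewrite -sumrB.
by apply: sum_antisym_eq0 => i k; rewrite w_sym; ring.
Qed.

Lemma mass_lap u : mass w r (lap w r u) = 0.
Proof.
have -> : mass w r (lap w r u) = inner w r (lap w r u) (fun _ => 1).
  by apply: eq_bigr => i _; rewrite mulr1.
by rewrite inner_lapE; apply: sum_antisym_eq0 => i k; rewrite w_sym; ring.
Qed.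

Lemma eigen_expansion u i : u i = \sum_m phi m i * inner w r (phi m) u.
Proof.
have E k : \sum_m phi m i * (d k * phi m k * u k) = u k * (k == i)%:R.
  by rewrite -(degr_phi_complete k i) mulr_sumr; apply: eq_bigr => m _; ring.
under eq_bigr do rewrite /inner mulr_sumr.
rewrite exchange_big (eq_bigr _ (fun k _ => E k)) (bigD1 i) //= eqxx mulr1.
by rewrite big1 ?addr0 // => k /negbTE ->; rewrite mulr0.
Qed.

Lemma inner_lap_phi m u :
  inner w r (lap w r (phi m)) u = lam m * inner w r (phi m) u.
Proof.
case: eig => _ _ _ lap_phi _.
by rewrite /inner mulr_sumr; apply: eq_bigr => i _; rewrite lap_phi; ring.
Qed.

Lemma lap_eq0_const u : (forall i, lap w r u i = 0) -> forall i k, u i = u k.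
Proof.
move=> lap_u0; case: eig => phi0 lam_gt0 _ _ _.
have phi_u0 (m : 'I_n) : (0 < m)%N -> inner w r (phi m) u = 0.
  move=> /lam_gt0 /gt_eqF /negbT lam_neq0; apply: (mulfI lam_neq0).
  rewrite mulr0 -inner_lap_phi inner_lapC /inner big1 // => k _.
  by rewrite lap_u0 mulr0.
have uE i : u i = \sum_(m : 'I_n)
    (if val m == 0%N then (Num.sqrt V)^-1 * inner w r (phi m) u else 0).
  rewrite {1}(eigen_expansion u i); apply: eq_bigr => m _.
  case: eqP => [/phi0 [_ ->] //|/eqP]; rewrite -lt0n => /phi_u0 ->.
  by rewrite mulr0.
by move=> i k; rewrite (uE i) (uE k).
Qed.

Section Green.
Variable j : 'I_n.

Let m0 : 'I_n := Ordinal (leq_ltn_trans (leq0n j) (ltn_ord j)).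

Lemma vol_gt0 : 0 < V.
Proof.
rewrite /vol (bigD1 j) //=; apply: ltr_pwDl; first exact: degr_gt0.
by apply: sumr_ge0 => k _; apply: powR_ge0.
Qed.

Lemma mass_phi_eq0 (m : 'I_n) : (0 < m)%N -> \sum_k d k * phi m k = 0.
Proof.
move=> m_gt0; case: eig => phi0 _ _ _ phi_on.
have [_ phi0E] := phi0 m0 erefl.
have m0m : m0 != m by rewrite -val_eqE /= eq_sym -lt0n.
have /eqP := phi_on m0 m; rewrite (negbTE m0m) /inner.
rewrite (eq_bigr (fun k => (Num.sqrt V)^-1 * (d k * phi m k))) => [|k _]; last first.
  by rewrite phi0E; ring.
rewrite -mulr_sumr mulf_eq0 invr_eq0 gt_eqF ?sqrtr_gt0 ?vol_gt0 //=.
by move/eqP.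
Qed.

Lemma sum_lam_phi_phi i : i != j ->
  \sum_(m : 'I_n | (0 < m)%N) lam m * phi m i * phi m j = - ((d i)^-1 * w i j / d j).
Proof.
move=> ij; case: eig => phi0 _ _ lap_phi _.
have [lam0 _] := phi0 m0 erefl.
rewrite (sum_ord_gt0 _ (m0 := m0)) // lam0 !mul0r subr0.
transitivity ((d i)^-1 *
    \sum_k w i k * (\sum_m phi m i * phi m j - \sum_m phi m k * phi m j)).
  symmetry; rewrite mulr_sumr.
  under eq_bigr do rewrite -sumrB mulr_sumr mulr_sumr.
  rewrite exchange_big; apply: eq_bigr => m _.
  rewrite -lap_phi /lap -[RHS]mulrA mulr_suml [RHS]mulr_sumr.
  by apply: eq_bigr => k _; ring.
rewrite (bigD1 j) //= [X in _ + X]big1 => [|k kj]; last first.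
  by rewrite !sum_phi_phi (negbTE ij) (negbTE kj) !mul0r subrr mulr0.
by rewrite !sum_phi_phi (negbTE ij) eqxx addr0 mul0r mul1r sub0r !mulrN mulrA.
Qed.

Definition green k := \sum_(m : 'I_n | (0 < m)%N) (lam m)^-1 * phi m j * phi m k.

Lemma lap_green i : lap w r green i = (j == i)%:R / d j - V^-1.
Proof.
case: eig => phi0 lam_gt0 _ lap_phi _.
rewrite /green lap_sum (eq_bigr (fun m => phi m j * phi m i)) => [|m m_gt0]; last first.
  by rewrite lap_phi mulrCA !mulrA mulfV ?mul1r ?gt_eqF ?lam_gt0.
have [_ phi0E] := phi0 m0 erefl.
rewrite (sum_ord_gt0 _ (m0 := m0)) // sum_phi_phi !phi0E -invfM -expr2.
by rewrite sqr_sqrtr // ltW // vol_gt0.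
Qed.

Lemma mass_green : mass w r green = 0.
Proof.
rewrite /mass /green; under eq_bigr do rewrite mulr_sumr.
rewrite exchange_big big1 // => m m_gt0.
rewrite (eq_bigr (fun k => (lam m)^-1 * phi m j * (d k * phi m k))) => [|k _].
  by rewrite -mulr_sumr mass_phi_eq0 ?mulr0.
by ring.
Qed.

Lemma is_eqmeas_green : is_eqmeas w r [set~ j] (fun k => - V * (green k - green j)).
Proof.
split=> i; rewrite in_setC1; last by move/negPn/eqP ->; rewrite subrr mulr0.
move=> ij; rewrite lap_affine lap_green eq_sym (negbTE ij) mul0r sub0r mulrNN.
by rewrite mulfV ?gt_eqF ?vol_gt0.
Qed.

(* Off j the difference of two solutions is harmonic; at j its Laplacian vanishes
   too because M(Δu) = 0. *)
Lemma is_eqmeas_compl1_uniq u v :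
  is_eqmeas w r [set~ j] u -> is_eqmeas w r [set~ j] v -> forall k, u k = v k.
Proof.
move=> [lap_u u_j] [lap_v v_j] k.
have j_out : j \notin [set~ j] by rewrite in_setC1 eqxx.
pose z k := u k - v k.
have lap_z_off i : i != j -> lap w r z i = 0.
  by move=> ij; rewrite lapB lap_u ?lap_v ?in_setC1 // subrr.
have lap_z i : lap w r z i = 0.
  have [->|] := eqVneq i j; last exact: lap_z_off.
  have := mass_lap z; rewrite /mass (bigD1 j) //= big1 => [|i' /lap_z_off ->].
    by rewrite addr0 => /eqP; rewrite mulf_eq0 (negbTE (degr_neq0 j)) => /eqP.
  by rewrite mulr0.
have /eqP := lap_eq0_const lap_z k j.
by rewrite /z (u_j j j_out) (v_j j j_out) subrr subr_eq0 => /eqP.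
Qed.

Lemma eqmeas_compl1 k : eqmeas w r [set~ j] k = - V * (green k - green j).
Proof.
apply: (is_eqmeas_compl1_uniq _ is_eqmeas_green).
pose nu : {ffun 'I_n -> R} := [ffun k => - V * (green k - green j)].
have nuE : (fun k => nu k) = (fun k => - V * (green k - green j)).
  by apply/funext => k'; rewrite ffunE.
have nu_sol : is_eqmeas w r [set~ j] (fun k => nu k).
  by rewrite nuE; exact: is_eqmeas_green.
rewrite /eqmeas; match goal with
  |- context [xget ?x0 ?P] => exact: (xgetI x0 (P := P) nu_sol) end.
Qed.

Lemma fj_green i : fj w r j i = - V * green i.
Proof.
have massE : mass w r (eqmeas w r [set~ j]) = V * V * green j.
  rewrite /mass (eq_bigr (fun k => - V * (d k * green k) + V * green j * d k)).
    rewrite big_split /= -!mulr_sumr.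
    by move: mass_green; rewrite /mass /vol => ->; ring.
  by move=> k _; rewrite eqmeas_compl1; ring.
rewrite /fj /avg massE eqmeas_compl1; field.
by rewrite gt_eqF ?vol_gt0.
Qed.

Lemma wtildeE gamma i : i != j ->
  wtilde w r gamma lam phi i j = (d i)^-1 * w i j + gamma * d j / V * fj w r j i.
Proof.
move=> ij; rewrite /wtilde (negbTE ij).
rewrite (eq_bigr (fun m => lam m * phi m i * phi m j
                          + gamma * ((lam m)^-1 * phi m j * phi m i))) => [|m _].
  rewrite big_split /= sum_lam_phi_phi // -mulr_sumr -/(green i) fj_green.
  by field; rewrite !degr_neq0 gt_eqF ?vol_gt0.
by ring.
Qed.

End Green.

End Spectral.

Theorem lemma6p14 (R : realType) (n : nat) (w : 'I_n -> 'I_n -> R) (r gamma : R)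
  (lam : 'I_n -> R) (phi : 'I_n -> 'I_n -> R) :
  is_graph w -> 0 <= r -> r <= 1 -> 0 <= gamma ->
  inCgamma w r gamma ->
  is_eigendecomp w r lam phi ->
  [/\ (forall i j, 0 <= wtilde w r gamma lam phi i j),
      (forall i j, 0 < w i j -> 0 < wtilde w r gamma lam phi i j) &
      (inC w r -> forall i j, (degr w r i)^-1 * w i j <= wtilde w r gamma lam phi i j)].
Proof.
move=> [_ w_sym w_diag w_ge0 _] _ _ gamma_ge0 Cgamma eig.
have wtE := wtildeE w_sym eig.
have d_gt0 := degr_gt0 eig.
have gamma_fj_ge0 i j : 0 <= fj w r j i -> 0 <= gamma * degr w r j / vol w r * fj w r j i.
  move=> fj_ge0; apply: mulr_ge0 fj_ge0; apply: divr_ge0.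
    exact: mulr_ge0 gamma_ge0 (ltW (d_gt0 j)).
  exact: ltW (vol_gt0 eig j).
have w_scaled_ge0 i j : 0 <= (degr w r i)^-1 * w i j.
  by rewrite mulr_ge0 // invr_ge0 ltW.
have wt_diag i : wtilde w r gamma lam phi i i = 0 by rewrite /wtilde eqxx.
split=> [i j|i j|C i j]; have [->|ij] := eqVneq i j;
  rewrite ?wt_diag ?w_diag ?mulr0 // wtE //.
- case: Cgamma => [->|[_ [C0 Cg]]]; first by rewrite !mul0r addr0 w_scaled_ge0.
  case: (Cg j i ij) => [w0|/ltW //]; rewrite w0 mulr0 add0r gamma_fj_ge0 //.
  by case: (C0 j i ij) => //; rewrite w0 ltxx.
- move=> w_gt0; case: Cgamma => [->|[_ [_ Cg]]].
    by rewrite !mul0r addr0 mulr_gt0 ?invr_gt0.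
  by case: (Cg j i ij) => // w0; move: w_gt0; rewrite w0 ltxx.
- by rewrite lerDl gamma_fj_ge0 ?C.
Qed.
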